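(* Let $f,g\in C[0,1]$ be real-valued continuous functions and let $f\cdot g$ denote their pointwise product. Then $$\overline{\dim}_B G(f\cdot g)\le \max\{\overline{\dim}_B G(f),\ \overline{\dim}_B G(g)\}.$$
   Context: $C[0,1]$ is the space of real-valued continuous functions on $[0,1]$. For $f\in C[0,1]$, the graph is $G(f)=\{(x,f(x)):x\in[0,1]\}\subset\mathbb{R}^2$. For a nonempty bounded set $F$, $N_\delta(F)$ is the smallest number of sets of diameter at most $\delta$ covering $F$, and the upper and lower box-counting dimensions are $\overline{\dim}_B F=\limsup_{\delta\to0}\frac{\log N_\delta(F)}{-\log\delta}$ and $\underline{\dim}_B F=\liminf_{\delta\to0}\frac{\log N_\delta(F)}{-\log\delta}$. *)

From HB Require Import structures.
From mathcomp Require Import all_boot all_order all_algebra.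
From mathcomp Require Import all_classical all_reals all_analysis.
Set Implicit Arguments. Unset Strict Implicit. Unset Printing Implicit Defensive.
Import Order.TTheory GRing.Theory Num.Theory.
Import numFieldNormedType.Exports.
Local Open Scope classical_set_scope.
Local Open Scope ring_scope.

Definition dist2 {R : realType} (p q : R * R) : R :=
  Num.sqrt ((p.1 - q.1) ^+ 2 + (p.2 - q.2) ^+ 2).

Definition diam_le {R : realType} (U : set (R * R)) (d : R) : Prop :=
  forall p q, U p -> U q -> dist2 p q <= d.

(* N_delta(F): smallest number of sets of diameter at most delta covering F
   (+oo if no finite cover exists). *)
Definition Ndelta {R : realType} (F : set (R * R)) (d : R) : \bar R :=
  ereal_inf [set (n%:R)%:E | n in
    [set n : nat | exists U : nat -> set (R * R),
       (forall i, (i < n)%N -> diam_le (U i) d) /\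
       F `<=` \bigcup_(i in [set i : nat | (i < n)%N]) U i]].

Definition box_ratio {R : realType} (F : set (R * R)) (d : R) : \bar R :=
  match Ndelta F d with
  | EFin r => (ln r / (- ln d))%:E
  | _ => +oo%E
  end.

Definition upper_box_dim {R : realType} (F : set (R * R)) : \bar R :=
  limf_esup (box_ratio F) (0^'+).

Definition graph01 {R : realType} (f : R -> R) : set (R * R) :=
  [set p | exists x, 0 <= x <= 1 /\ p = (x, f x)].

(* Cover the plane by the mesh of width [w = d / 2] and count the cells met by
   a graph: this count is at least [N_d] and at most [25 N_d], since a set of
   diameter [d] meets at most 5 x 5 cells.  In a column of the mesh, the
   intermediate value theorem makes the cells met by a continuous graph
   consecutive, so their number is, up to one, the oscillation in the column
   divided by [w].  By [f x g x - f y g y = f x (g x - g y) + g y (f x - f y)],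
   the oscillation of [f g] in a column is at most [Bf osc g + Bg osc f] for
   bounds [Bf], [Bg] of [|f|], [|g|]; summing over the columns gives
   [N_d(G(f g)) <= C (N_d(G f) + N_d(G g))] with [C] independent of [d], and
   [C] disappears from [log N_d / - log d] as [d -> 0]. *)

From HB Require Import structures.
From mathcomp Require Import all_boot all_order all_algebra.
From mathcomp Require Import all_classical all_reals all_analysis.
From mathcomp Require Import zify ring lra.
Import Order.TTheory GRing.Theory Num.Theory.
Import numFieldNormedType.Exports.
Local Open Scope classical_set_scope.
Local Open Scope ring_scope.

Section covers.
Context {R : realType}.
Implicit Types (A B F : set (R * R)) (d : R).

Definition covers F d (n : nat) : Prop :=
  exists U : nat -> set (R * R),
    (forall i, (i < n)%N -> diam_le (U i) d) /\
    F `<=` \bigcup_(i in [set i : nat | (i < n)%N]) U i.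

Lemma covers_Ndelta {F d n0} : covers F d n0 ->
  exists n, [/\ Ndelta F d = (n%:R)%:E, covers F d n &
                forall m, covers F d m -> (n <= m)%N].
Proof.
move=> cov0.
have exP : exists n, `[< covers F d n >] by exists n0; apply/asboolP.
case: (ex_minnP exP) => n /asboolP covn minn.
exists n; split=> // [|m covm]; last by apply: minn; apply/asboolP.
apply/eqP; rewrite eq_le; apply/andP; split; first by apply: ereal_inf_lbound; exists n.
apply/ereal_infP => _ [m covm <-].
by rewrite lee_fin ler_nat; apply: minn; apply/asboolP.
Qed.

Lemma coversS {A B d n} : covers B d n -> A `<=` B -> covers A d n.
Proof. by move=> [U [dU BU]] AB; exists U; split => // p /AB /BU. Qed.

Lemma covers0 d : covers set0 d 0.
Proof. by exists (fun=> set0); split => // p. Qed.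

Lemma covers_diam A d : diam_le A d -> covers A d 1.
Proof. by move=> dA; exists (fun=> A); split => // p Ap; exists 0%N. Qed.

Lemma coversU {A B d m n} :
  covers A d m -> covers B d n -> covers (A `|` B) d (m + n).
Proof.
move=> [U [dU AU]] [V [dV BV]].
exists (fun i => if (i < m)%N then U i else V (i - m)%N); split.
  move=> i lt_i; case: ifP => [|/negbT]; first exact: dU.
  by rewrite -leqNgt => ?; apply: dV; lia.
move=> p [/AU [i /= lt_i Uip]|/BV [i /= lt_i Vip]].
  by exists i => /=; [lia | rewrite lt_i].
exists (i + m)%N => /=; first lia.
by rewrite ltnNge leq_addl /= addnK.
Qed.

Lemma covers_bigcup d (A : nat -> set (R * R)) (c : nat -> nat) K F :
  (forall k, (k < K)%N -> covers (A k) d (c k)) ->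
  F `<=` \bigcup_(k in [set k : nat | (k < K)%N]) A k ->
  covers F d (\sum_(k < K) c k)%N.
Proof.
elim: K F => [|K IH] F covA FA.
  by rewrite big_ord0; apply: (coversS (covers0 d)) => p /FA [k /= ?]; lia.
rewrite big_ord_recr /=.
have covK : covers (\bigcup_(k in [set k | (k < K)%N]) A k) d (\sum_(k < K) c k)%N.
  by apply: IH => // k lt_k; apply: covA; lia.
apply: (coversS (coversU covK (covA K _))) => // p /FA [k /= lt_k Akp].
have [lt_kK|ge_kK] := ltnP k K; first by left; exists k.
by right; have <- : k = K by lia.
Qed.

End covers.

Lemma truncn_eq_dist_lt1 {R : realType} {a b : R} : 0 <= a -> 0 <= b ->
  Num.truncn a = Num.truncn b -> `|a - b| < 1.
Proof.
move=> a0 b0 eq_ab.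
have /andP[a1 a2] := truncn_itv a0; have /andP[b1 b2] := truncn_itv b0.
rewrite eq_ab -natr1 in a1 a2; rewrite -natr1 in b2.
by rewrite ltr_norml; apply/andP; split; lra.
Qed.

Lemma truncn_leD {R : realType} {a b : R} {n : nat} : 0 <= a -> 0 <= b ->
  a <= b + n%:R -> (Num.truncn a <= Num.truncn b + n)%N.
Proof.
move=> a0 b0 le_ab.
have /andP[a1 _] := truncn_itv a0; have /andP[_ b2] := truncn_itv b0.
rewrite -natr1 in b2.
rewrite -ltnS -[X in (_ < X)%N]addn1 -(ltr_nat R) !natrD; lra.
Qed.

Lemma truncn_between {R : realType} {a b c : R} {k : nat} : 0 <= a -> 0 <= b ->
  Num.truncn a = k -> Num.truncn b = k ->
  Num.min a b <= c <= Num.max a b -> Num.truncn c = k.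
Proof.
move=> a0 b0 ak bk /andP[]; rewrite ge_min le_max => ac cb.
apply/eqP; rewrite eqn_leq; apply/andP; split.
  by case/orP: cb => /le_truncn; rewrite ?ak ?bk.
have c0 : 0 <= c by case/orP: ac => /(le_trans _)->.
by case/orP: ac => /le_truncn; rewrite ?ak ?bk.
Qed.

Lemma dist2_ge_fst {R : realType} (p q : R * R) : `|p.1 - q.1| <= dist2 p q.
Proof.
rewrite /dist2 -sqrtr_sqr ler_sqrt; last by rewrite addr_ge0 // sqr_ge0.
by rewrite lerDl sqr_ge0.
Qed.

Lemma dist2_ge_snd {R : realType} (p q : R * R) : `|p.2 - q.2| <= dist2 p q.
Proof.
rewrite /dist2 -sqrtr_sqr ler_sqrt; last by rewrite addr_ge0 // sqr_ge0.
by rewrite lerDr sqr_ge0.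
Qed.

Lemma sum_nat_itv (lo hi M : nat) :
  (\sum_(k < M) (lo <= k <= hi)%N = minn M hi.+1 - lo)%N.
Proof.
elim: M => [|M IH]; first by rewrite big_ord0 min0n.
by rewrite big_ord_recr /= IH; case: (leqP lo M) => /=; case: (leqP M hi) => /=; lia.
Qed.

Lemma leq_term_sum (F : nat -> nat) {N j : nat} :
  (j < N)%N -> (F j <= \sum_(i < N) F i)%N.
Proof. by move=> lt_jN; rewrite (bigD1 (Ordinal lt_jN)) //= leq_addr. Qed.

Section grid.
Context {R : realType}.
Variables (w : R) (J : nat).
Hypothesis w_gt0 : 0 < w.

(* Cells of the [w]-mesh; rows are shifted by [J] so that the graphs under
   consideration have nonnegative row coordinates. *)
Definition gridx (p : R * R) : R := p.1 / w.
Definition gridy (p : R * R) : R := p.2 / w + J%:R.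

Definition cell (k j : nat) : set (R * R) :=
  [set p | 0 <= gridx p /\ Num.truncn (gridx p) = k /\
           0 <= gridy p /\ Num.truncn (gridy p) = j].

Lemma cell_diam k j : diam_le (cell k j) (2 * w).
Proof.
move=> p q [px0 [pk [py0 pj]]] [qx0 [qk [qy0 qj]]].
have := truncn_eq_dist_lt1 px0 qx0 (etrans pk (esym qk)).
have := truncn_eq_dist_lt1 py0 qy0 (etrans pj (esym qj)).
rewrite /gridx /gridy opprD addrACA subrr addr0 -!mulrBl !normrM.
rewrite [`|w^-1|]gtr0_norm ?invr_gt0 // !ltr_pdivrMr // !mul1r => dy dx.
have w2 : 0 <= 2 * w by rewrite mulr_ge0 // ltW.
rewrite /dist2 -(ger0_norm w2) -sqrtr_sqr ler_sqrt ?sqr_ge0 //.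
have := ltW (ltr_pM (normr_ge0 _) (normr_ge0 _) dx dx).
have := ltW (ltr_pM (normr_ge0 _) (normr_ge0 _) dy dy).
rewrite -!expr2 !real_normK ?num_real // => hy hx.
have := sqr_ge0 w; rewrite exprMn; lra.
Qed.

Lemma gridx_leD {p q} : dist2 p q <= 2 * w -> gridx p <= gridx q + 2%:R.
Proof.
move=> d_pq; have /ler_normlW dx := le_trans (dist2_ge_fst p q) d_pq.
by rewrite /gridx ler_pdivrMr // mulrDl divfK ?gt_eqF //; lra.
Qed.

Lemma gridy_leD {p q} : dist2 p q <= 2 * w -> gridy p <= gridy q + 2%:R.
Proof.
move=> d_pq; have /ler_normlW dy := le_trans (dist2_ge_snd p q) d_pq.
rewrite /gridy -addrA [J%:R + _]addrC addrA lerD2r.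
by rewrite ler_pdivrMr // mulrDl divfK ?gt_eqF //; lra.
Qed.

Lemma cells_meeting_le (A : set (R * R)) (M N : nat) : diam_le A (2 * w) ->
  (\sum_(k < M) \sum_(j < N) `[< exists p, A p /\ cell k j p >] <= 25)%N.
Proof.
move=> dA.
have [[p0 [Ap0 p0x p0y]]|none] :=
  pselect (exists p, [/\ A p, 0 <= gridx p & 0 <= gridy p]); last first.
  rewrite big1 // => k _; rewrite big1 // => j _.
  by case: asboolP => // -[p [Ap [px [_ [py _]]]]]; case: none; exists p.
set k0 := Num.truncn (gridx p0); set j0 := Num.truncn (gridy p0).
apply: (@leq_trans (\sum_(k < M) \sum_(j < N)
   ((k0 - 2 <= k <= k0 + 2) * (j0 - 2 <= j <= j0 + 2)))%N).
  apply: leq_sum => k _; apply: leq_sum => j _.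
  case: asboolP => // -[p [Ap [px [pk [py pj]]]]].
  have kp := truncn_leD px p0x (gridx_leD (dA _ _ Ap Ap0)).
  have kp0 := truncn_leD p0x px (gridx_leD (dA _ _ Ap0 Ap)).
  have jp := truncn_leD py p0y (gridy_leD (dA _ _ Ap Ap0)).
  have jp0 := truncn_leD p0y py (gridy_leD (dA _ _ Ap0 Ap)).
  rewrite pk pj -/k0 -/j0 in kp kp0 jp jp0.
  have -> : (k0 - 2 <= k <= k0 + 2)%N by apply/andP; split; lia.
  by have -> : (j0 - 2 <= j <= j0 + 2)%N by apply/andP; split; lia.
under eq_bigr do rewrite -big_distrr /=.
rewrite -big_distrl /= !sum_nat_itv -[25%N]/(5 * 5)%N; apply: leq_mul; lia.
Qed.

End grid.

Lemma IVT01 {R : realType} {phi : R -> R} {x y v : R} :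
  {within `[0, 1], continuous phi} -> 0 <= x <= 1 -> 0 <= y <= 1 ->
  Num.min (phi x) (phi y) <= v <= Num.max (phi x) (phi y) ->
  exists2 z, Num.min x y <= z <= Num.max x y & phi z = v.
Proof.
move=> cphi; wlog le_xy : x y / x <= y => [hwlog x01 y01|].
  have /orP[le_xy|le_yx] := le_total x y; first exact: hwlog.
  rewrite [Num.min x _]minC [Num.max x _]maxC.
  by rewrite [Num.min (phi x) _]minC [Num.max (phi x) _]maxC; exact: hwlog.
move=> /andP[x0 _] /andP[_ y1] hv.
have cxy : {within `[x, y], continuous phi}.
  apply: continuous_subspaceW cphi => t /=; rewrite !in_itv /= => /andP[xt ty].
  by rewrite (le_trans x0 xt) (le_trans ty y1).
have [z] := IVT le_xy cxy hv.
by rewrite in_itv /= (min_idPl le_xy) (max_idPr le_xy); exists z.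
Qed.

Section graph_cells.
Context {R : realType}.
Variables (w : R) (J M N : nat) (phi : R -> R).
Hypothesis w_gt0 : 0 < w.

Definition in_grid : Prop := forall x, 0 <= x <= 1 ->
  [/\ (Num.truncn (x / w) < M)%N, 0 <= gridy w J (x, phi x)
    & (Num.truncn (gridy w J (x, phi x)) < N)%N].

Definition hit (k j : nat) : bool :=
  `[< exists x, 0 <= x <= 1 /\ cell w J k j (x, phi x) >].

Definition col_hits (k : nat) : nat := (\sum_(j < N) hit k j)%N.

Definition hits : nat := (\sum_(k < M) col_hits k)%N.

Hypothesis graph_in_grid : in_grid.

Lemma graph_cell {x} : 0 <= x <= 1 ->
  cell w J (Num.truncn (x / w)) (Num.truncn (gridy w J (x, phi x))) (x, phi x).
Proof.
move=> x01; have [_ y0 _] := graph_in_grid _ x01.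
split; last by do !split.
by case/andP: x01 => x0 _; rewrite /gridx divr_ge0 // ltW.
Qed.

Lemma hit_graph {x} : 0 <= x <= 1 ->
  hit (Num.truncn (x / w)) (Num.truncn (gridy w J (x, phi x))).
Proof. by move=> x01; apply/asboolP; exists x; split => //; exact: graph_cell. Qed.

Lemma col_hits_gt0 {x} : 0 <= x <= 1 -> (0 < col_hits (Num.truncn (x / w)))%N.
Proof.
move=> x01; have [_ _ lt_jN] := graph_in_grid _ x01.
apply: leq_trans (leq_term_sum (hit _) lt_jN).
by rewrite lt0b hit_graph.
Qed.

Lemma covers_hits : covers (graph01 phi) (2 * w) hits.
Proof.
rewrite /hits.
apply: (@covers_bigcup _ _
  (fun k => graph01 phi `&` [set p | Num.truncn (p.1 / w) = k])).
  move=> k _; rewrite /col_hits.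
  apply: (@covers_bigcup _ _ (fun j => if hit k j then cell w J k j else set0)
    (fun j => nat_of_bool (hit k j))).
    move=> j _; case: (hit k j); [exact/covers_diam/cell_diam | exact: covers0].
  move=> _ [[x [x01 ->]] /= <-]; have [_ _ lt_jN] := graph_in_grid _ x01.
  exists (Num.truncn (gridy w J (x, phi x))) => //=.
  by rewrite hit_graph //; exact: graph_cell.
move=> _ [x [x01 ->]]; have [lt_kM _ _] := graph_in_grid _ x01.
by exists (Num.truncn (x / w)) => //; split => //; exists x.
Qed.

Lemma hits_le_cover n : covers (graph01 phi) (2 * w) n -> (hits <= 25 * n)%N.
Proof.
move=> [U [dU graphU]].
pose meet i k j : bool := `[< exists p, (U i `&` graph01 phi) p /\ cell w J k j p >].
apply: (@leq_trans (\sum_(k < M) \sum_(j < N) \sum_(i < n) meet i k j)%N).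
  apply: leq_sum => k _; apply: leq_sum => j _.
  rewrite /hit; case: asboolP => // -[x [x01 cx]].
  have gx : graph01 phi (x, phi x) by exists x.
  have [i /= lt_in Uix] := graphU _ gx.
  apply: leq_trans (leq_term_sum (fun i => meet i k j) lt_in).
  by rewrite lt0b /meet; apply/asboolP; exists (x, phi x).
under eq_bigr do rewrite exchange_big /=; rewrite exchange_big /=.
apply: (@leq_trans (\sum_(i < n) 25)%N); last by rewrite sum_nat_const card_ord mulnC.
apply: leq_sum => -[i lt_in] _; rewrite /meet.
apply: (cells_meeting_le w J w_gt0) => p q [Up _] [Uq _].
exact: (dU _ lt_in).
Qed.

Lemma cols_le_hits : (forall k, (k < M)%N -> k%:R * w <= 1) -> (M <= hits)%N.
Proof.
move=> hM; rewrite -[X in (X <= _)%N]muln1 -[M in (M * 1)%N]card_ord -sum_nat_const.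
apply: leq_sum => -[k lt_kM] _ /=.
have kw01 : 0 <= k%:R * w <= 1 by rewrite hM // mulr_ge0 // ltW.
by have := col_hits_gt0 kw01; rewrite mulfK ?gt_eqF // natrK.
Qed.

Lemma Ndelta_graph_hits : exists n,
  [/\ Ndelta (graph01 phi) (2 * w) = (n%:R)%:E, (n <= hits)%N & (hits <= 25 * n)%N].
Proof.
have [n [-> cov_n min_n]] := covers_Ndelta covers_hits.
by exists n; split; [|exact: min_n covers_hits|exact: hits_le_cover].
Qed.

Hypothesis phi_cont : {within `[0, 1], continuous phi}.

Lemma hit_rows_between {x y k j} : 0 <= x <= 1 -> 0 <= y <= 1 ->
  Num.truncn (x / w) = k -> Num.truncn (y / w) = k -> phi x <= phi y ->
  (Num.truncn (gridy w J (x, phi x)) <= j <= Num.truncn (gridy w J (y, phi y)))%N ->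
  hit k j.
Proof.
move=> x01 y01 xk yk le_phi /andP[le_xj le_jy].
have [_ gx0 _] := graph_in_grid _ x01; have [_ gy0 _] := graph_in_grid _ y01.
have [<-|ne_jx] := eqVneq (Num.truncn (gridy w J (x, phi x))) j.
  by rewrite -xk; exact: hit_graph.
pose v := (j%:R - J%:R) * w.
have /andP[_ gx_lt] := truncn_itv gx0; have /andP[gy_ge _] := truncn_itv gy0.
have lt_xj : (Num.truncn (gridy w J (x, phi x)) < j)%N by rewrite ltn_neqAle ne_jx.
have le_jy' : j%:R <= (Num.truncn (gridy w J (y, phi y)))%:R :> R by rewrite ler_nat.
have le_xj' : (Num.truncn (gridy w J (x, phi x))).+1%:R <= j%:R :> R by rewrite ler_nat.
rewrite /gridy /= in gx_lt gy_ge.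
have hv : Num.min (phi x) (phi y) <= v <= Num.max (phi x) (phi y).
  rewrite (min_idPl le_phi) (max_idPr le_phi) /v.
  by apply/andP; split; [rewrite -ler_pdivrMr | rewrite -ler_pdivlMr] => //; lra.
have [z zxy phiz] := IVT01 phi_cont x01 y01 hv.
have z01 : 0 <= z <= 1.
  move: zxy x01 y01; rewrite ge_min le_max => /andP[+ +] /andP[x0 x1] /andP[y0 y1].
  by do 2 case/orP=> ?; apply/andP; split; lra.
have zk : Num.truncn (z / w) = k.
  have w1 : 0 <= w^-1 by rewrite invr_ge0 ltW.
  case/andP: x01 => x0 _; case/andP: y01 => y0 _; case/andP: z01 => z0 _.
  apply: truncn_between (divr_ge0 x0 (ltW w_gt0)) (divr_ge0 y0 (ltW w_gt0)) xk yk _.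
  by rewrite -minr_pMl // -maxr_pMl // !ler_pM2r ?invr_gt0.
apply/asboolP; exists z; split => //.
have gz : gridy w J (z, phi z) = j%:R by rewrite /gridy /= phiz /v mulfK ?gt_eqF //; ring.
split; first by case/andP: z01 => z0 _; rewrite /gridx divr_ge0 // ltW.
by rewrite /gridx zk gz natrK.
Qed.

Lemma col_osc_lt {x y k} : 0 <= x <= 1 -> 0 <= y <= 1 ->
  Num.truncn (x / w) = k -> Num.truncn (y / w) = k ->
  phi y - phi x < w * (col_hits k)%:R.
Proof.
move=> x01 y01 xk yk; have w0 := w_gt0.
have [le_yx|lt_xy] := leP (phi y) (phi x).
  have : 1 <= (col_hits k)%:R :> R by rewrite ler1n -xk col_hits_gt0.
  by rewrite -(ler_pM2l w0) mulr1; lra.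
have [_ gx0 _] := graph_in_grid _ x01; have [_ gy0 lt_jyN] := graph_in_grid _ y01.
set jx := Num.truncn (gridy w J (x, phi x)) in gx0 *.
set jy := Num.truncn (gridy w J (y, phi y)) in gy0 lt_jyN *.
have le_jxy : (jx <= jy)%N by apply: le_truncn; rewrite lerD2r ler_pM2r ?invr_gt0 // ltW.
have many : (jy.+1 - jx <= col_hits k)%N.
  rewrite -(minn_idPr lt_jyN) -sum_nat_itv; apply: leq_sum => j _.
  case: (boolP (jx <= j <= jy)%N) => // j_in.
  by rewrite (hit_rows_between x01 y01 xk yk (ltW lt_xy) j_in).
have /andP[gx_ge _] := truncn_itv gx0; have /andP[_ gy_lt] := truncn_itv gy0.
rewrite -/jx in gx_ge; rewrite -/jy -natr1 in gy_lt.
have : (jy.+1 - jx)%:R <= (col_hits k)%:R :> R by rewrite ler_nat.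
rewrite natrB ?(leqW le_jxy) // -natr1 => hmany; rewrite /gridy /= in gx_ge gy_lt.
have : (phi y - phi x) / w < (col_hits k)%:R by rewrite mulrBl; lra.
by rewrite ltr_pdivrMr // mulrC.
Qed.

Lemma col_osc_le {x y k} : 0 <= x <= 1 -> 0 <= y <= 1 ->
  Num.truncn (x / w) = k -> Num.truncn (y / w) = k ->
  `|phi y - phi x| <= w * (col_hits k)%:R.
Proof.
move=> x01 y01 xk yk.
have := col_osc_lt x01 y01 xk yk; have := col_osc_lt y01 x01 yk xk.
by rewrite ler_norml => ? ?; apply/andP; split; lra.
Qed.

End graph_cells.

Arguments col_osc_le {R w J M N phi} w_gt0 graph_in_grid phi_cont {x y k}.
Arguments cols_le_hits {R w J M N phi}.
Arguments Ndelta_graph_hits {R w J M N phi}.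

Section product.
Context {R : realType}.
Variables (w : R) (J M N Bf Bg : nat) (f g : R -> R).
Hypothesis w_gt0 : 0 < w.
Hypotheses (f_in_grid : in_grid w J M N f) (g_in_grid : in_grid w J M N g)
  (fg_in_grid : in_grid w J M N (fun x => f x * g x)).
Hypotheses (f_cont : {within `[0, 1], continuous f})
  (g_cont : {within `[0, 1], continuous g}).
Hypotheses (f_bound : forall x, 0 <= x <= 1 -> `|f x| <= Bf%:R)
  (g_bound : forall x, 0 <= x <= 1 -> `|g x| <= Bg%:R).

Local Notation fg := (fun x => f x * g x).

Definition col_gap k : nat :=
  (Bf * col_hits w J N g k + Bg * col_hits w J N f k)%N.

Lemma gridy_mul_leD {x x0 k} : 0 <= x <= 1 -> 0 <= x0 <= 1 ->
  Num.truncn (x / w) = k -> Num.truncn (x0 / w) = k ->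
  gridy w J (x, fg x) <= gridy w J (x0, fg x0) + (col_gap k)%:R.
Proof.
move=> x01 x001 xk x0k.
have dg := col_osc_le w_gt0 g_in_grid g_cont x001 x01 x0k xk.
have df := col_osc_le w_gt0 f_in_grid f_cont x001 x01 x0k xk.
have ef := ler_pM (normr_ge0 _) (normr_ge0 _) (f_bound _ x01) dg.
have eg := ler_pM (normr_ge0 _) (normr_ge0 _) (g_bound _ x001) df.
have gap : fg x - fg x0 <= w * (col_gap k)%:R.
  have -> : fg x - fg x0 = f x * (g x - g x0) + g x0 * (f x - f x0) by rewrite /=; ring.
  apply: le_trans (ler_norm _) _; apply: le_trans (ler_normD _ _) _.
  by rewrite !normrM /col_gap natrD !natrM; lra.
rewrite /gridy /= addrAC lerD2r -lerBlDl -mulrBl.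
by rewrite ler_pdivrMr // [_ * w]mulrC.
Qed.

Lemma col_hits_mul_le k :
  (col_hits w J N fg k <= 2 * col_gap k + 1)%N.
Proof.
have [[x0 [x001 x0k]]|none] :=
  pselect (exists x0, 0 <= x0 <= 1 /\ Num.truncn (x0 / w) = k); last first.
  rewrite /col_hits big1 // => j _; apply/eqP; rewrite eqb0.
  by apply/asboolP => -[x [x01 [_ [xk _]]]]; apply: none; exists x.
have [_ gx00 _] := fg_in_grid _ x001.
set j0 := Num.truncn (gridy w J (x0, fg x0)).
apply: (@leq_trans (\sum_(j < N) (j0 - col_gap k <= j <= j0 + col_gap k))%N).
  apply: leq_sum => j _; rewrite /hit; case: asboolP => // -[x [x01 [_ [xk [gx0 xj]]]]].
  have le_j := truncn_leD gx0 gx00 (gridy_mul_leD x01 x001 xk x0k).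
  have le_j0 := truncn_leD gx00 gx0 (gridy_mul_leD x001 x01 x0k xk).
  rewrite xj -/j0 in le_j le_j0.
  by have -> : (j0 - col_gap k <= j <= j0 + col_gap k)%N by apply/andP; split; lia.
by rewrite sum_nat_itv; lia.
Qed.

Lemma hits_mul_le : (M <= hits w J M N f)%N ->
  (hits w J M N fg <= (2 * (Bf + Bg) + 1) * (hits w J M N f + hits w J M N g))%N.
Proof.
move=> le_M; apply: (@leq_trans (\sum_(k < M) (2 * col_gap k + 1))%N).
  by apply: leq_sum => k _; exact: col_hits_mul_le.
rewrite big_split /= sum_nat_const card_ord muln1 -big_distrr /= big_split /=.
rewrite -!big_distrr /= -/(hits w J M N f) -/(hits w J M N g); nia.
Qed.

End product.

Arguments hits_mul_le {R w J M N Bf Bg f g} w_gt0 f_in_grid g_in_grid fg_in_grid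
  f_cont g_cont f_bound g_bound _.

Lemma in_grid_of_bound {R : realType} {w B : R} {J M N : nat} {phi : R -> R} :
  0 < w -> (forall x, 0 <= x <= 1 -> `|phi x| <= B) ->
  B / w < J%:R -> (Num.truncn w^-1 < M)%N -> (J + J <= N)%N ->
  in_grid w J M N phi.
Proof.
move=> w_gt0 phi_bound BJ w1M JN x /andP[x0 x1].
have /ler_normlP[phi_lo phi_hi] := phi_bound x (introT andP (conj x0 x1)).
have le_phiB : phi x / w <= B / w by rewrite ler_pM2r ?invr_gt0.
have ge_phiB : - (B / w) <= phi x / w by rewrite -mulNr ler_pM2r ?invr_gt0 // lerNl.
split.
- apply: leq_ltn_trans w1M; apply: le_truncn.
  by rewrite ler_pdivrMr // mulVf ?gt_eqF.
- by rewrite /gridy /=; lra.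
- apply: leq_trans JN; rewrite /gridy /= truncn_lt_nat; last lra.
  by rewrite natrD; lra.
Qed.

Lemma Ndelta_graph_mul {R : realType} {f g : R -> R} {Bf Bg : nat} {d : R} :
  {within `[0, 1], continuous f} -> {within `[0, 1], continuous g} ->
  (forall x, 0 <= x <= 1 -> `|f x| <= Bf%:R) ->
  (forall x, 0 <= x <= 1 -> `|g x| <= Bg%:R) -> 0 < d ->
  exists nf ng nh : nat,
    [/\ Ndelta (graph01 f) d = (nf%:R)%:E, Ndelta (graph01 g) d = (ng%:R)%:E,
        Ndelta (graph01 (fun x => f x * g x)) d = (nh%:R)%:E &
        [/\ (0 < nf)%N, (0 < ng)%N, (0 < nh)%N &
            (nh <= 25 * (2 * (Bf + Bg) + 1) * (nf + ng))%N]].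
Proof.
move=> f_cont g_cont f_bound g_bound d_gt0.
pose w := d / 2; have w_gt0 : 0 < w by rewrite /w; lra.
have -> : d = 2 * w by rewrite /w; field.
pose B : R := (Bf + Bg + Bf * Bg)%:R.
have fg_bound x : 0 <= x <= 1 -> `|f x * g x| <= B.
  move=> x01; rewrite normrM /B !natrD natrM.
  have := ler_pM (normr_ge0 _) (normr_ge0 _) (f_bound x x01) (g_bound x x01).
  by have := ler0n R Bf; have := ler0n R Bg; lra.
have le_B (n : nat) : (n <= Bf + Bg)%N -> n%:R <= B.
  by move=> le_n; rewrite ler_nat; lia.
pose J := (Num.truncn (B / w)).+1; pose M := (Num.truncn w^-1).+1.
have grid phi : (forall x, 0 <= x <= 1 -> `|phi x| <= B) -> in_grid w J M (J + J) phi.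
  move=> phi_bound.
  exact: in_grid_of_bound w_gt0 phi_bound (truncnS_gt _) (ltnSn _) (leqnn _).
have cols phi : in_grid w J M (J + J) phi -> (0 < M <= hits w J M (J + J) phi)%N.
  move=> /cols_le_hits -> // k; rewrite ltnS => le_k.
  rewrite -ler_pdivlMr // div1r (le_trans (y := (Num.truncn w^-1)%:R)) ?ler_nat //.
  by rewrite truncn_le invr_ge0 ltW.
have grid_f : in_grid w J M (J + J) f.
  by apply: grid => x x01; apply: le_trans (f_bound x x01) (le_B _ (leq_addr _ _)).
have grid_g : in_grid w J M (J + J) g.
  by apply: grid => x x01; apply: le_trans (g_bound x x01) (le_B _ (leq_addl _ _)).
have grid_fg := grid _ fg_bound.
have [nf [Ef le_nf ge_nf]] := Ndelta_graph_hits w_gt0 grid_f.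
have [ng [Eg le_ng ge_ng]] := Ndelta_graph_hits w_gt0 grid_g.
have [nh [Eh le_nh ge_nh]] := Ndelta_graph_hits w_gt0 grid_fg.
have /andP[M_gt0 M_f] := cols _ grid_f; have /andP[_ M_g] := cols _ grid_g.
have /andP[_ M_fg] := cols _ grid_fg.
have hits_fg :=
  hits_mul_le w_gt0 grid_f grid_g grid_fg f_cont g_cont f_bound g_bound M_f.
exists nf, ng, nh; split => //; split; try lia.
by apply: (leq_trans le_nh); apply: (leq_trans hits_fg); nia.
Qed.

Lemma box_ratio_le_maxe {R : realType} {F G H : set (R * R)} {C nf ng nh : nat}
  {d : R} :
  0 < d < 1 ->
  Ndelta F d = (nf%:R)%:E -> Ndelta G d = (ng%:R)%:E -> Ndelta H d = (nh%:R)%:E ->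
  (0 < nf)%N -> (0 < ng)%N -> (0 < nh)%N -> (nh <= C * (nf + ng))%N ->
  (box_ratio H d <=
     maxe (box_ratio F d) (box_ratio G d) + (ln (2 * C)%:R / - ln d)%:E)%E.
Proof.
move=> /andP[d0 d1] EF EG EH nf0 ng0 nh0 le_nh.
rewrite /box_ratio EF EG EH -EFin_max -EFinD lee_fin.
have L0 : 0 < - ln d by rewrite oppr_gt0 ln_lt0 // d0 d1.
have Linv : 0 <= (- ln d)^-1 by rewrite invr_ge0 ltW.
rewrite -maxr_pMl // addrC -mulrDl ler_pM2r ?invr_gt0 //.
set m := maxn nf ng.
have pos (n : nat) : (0 < n)%N -> (n%:R : R) \is Num.pos by rewrite posrE ltr0n.
have le_nhm : (nh <= 2 * C * m)%N by apply: leq_trans le_nh _; rewrite /m; nia.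
apply: (@le_trans _ _ (ln (2 * C * m)%:R)).
  by rewrite ler_ln ?ler_nat ?pos //; lia.
rewrite natrM lnM ?pos //; try lia; rewrite lerD2l /m.
by have [_|_] := leqP nf ng; rewrite le_max lexx ?orbT.
Qed.

Section limf_esup_maxe.
Context {T : choiceType} {X : filteredType T} {R : realType}.
Context (F : set_system X) {FF : Filter F}.
Local Open Scope ereal_scope.

Lemma limf_esup_le_maxe (a b c : X -> \bar R) :
  (forall e : R, (0 < e)%R -> \forall t \near F, c t <= maxe (a t) (b t) + e%:E) ->
  limf_esup c F <= maxe (limf_esup a F) (limf_esup b F).
Proof.
move=> near_c.
have le_c r e : maxe (limf_esup a F) (limf_esup b F) < r%:E -> (0 < e)%R ->
    limf_esup c F <= (r + e)%:E.
  rewrite gt_max => /andP[/ereal_inf_lt[_ [Va FVa <-] sup_a]].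
  move=> /ereal_inf_lt[_ [Vb FVb <-] sup_b] e0.
  pose V := Va `&` Vb `&` [set t | c t <= maxe (a t) (b t) + e%:E].
  have Fc : F [set t | c t <= maxe (a t) (b t) + e%:E] := near_c e e0.
  have FV : F V := @filterI _ _ FF _ _ (@filterI _ _ FF _ _ FVa FVb) Fc.
  apply: (@le_trans _ _ (ereal_sup (c @` V))).
    by apply: ereal_inf_lbound; exists V.
  apply: ge_ereal_sup => _ [t [[Vat Vbt] ct] <-].
  apply: le_trans ct _; rewrite EFinD leeD2r // ge_max.
  have a_lt : a t < r%:E by apply: le_lt_trans sup_a; apply: ereal_sup_ubound; exists t.
  have b_lt : b t < r%:E by apply: le_lt_trans sup_b; apply: ereal_sup_ubound; exists t.
  by rewrite !ltW.
case E: (maxe (limf_esup a F) (limf_esup b F)) => [r| |].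
- apply/lee_addgt0Pr => e e0.
  have := le_c (r + e / 2)%R (e / 2)%R; rewrite E lte_fin -EFinD.
  by rewrite -addrA -splitr; apply; lra.
- exact: leey.
- suff -> : limf_esup c F = -oo by [].
  apply: eq_ninfty => r.
  by have := le_c (r - 1)%R 1%R; rewrite E ltNye subrK; apply.
Qed.

End limf_esup_maxe.

Lemma ln_ratio_near0 {R : realType} (K e : R) : 0 < e ->
  \forall d \near 0^'+, K / - ln d < e.
Proof.
move=> e0; near=> d.
have d0 : 0 < d by near: d; exact: nbhs_right_gt.
have d1 : d < 1 by near: d; exact: nbhs_right_lt.
have L0 : 0 < - ln d by rewrite oppr_gt0 ln_lt0 // d0 d1.
have lnd : ln d < - (K / e) by near: d; exact: (cvgrNy_lt (@lnNy R) _).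
by rewrite ltr_pdivrMr // mulrC -ltr_pdivrMr //; lra.
Unshelve. all: by end_near.
Qed.

Lemma bounded01 {R : realType} {phi : R -> R} : {within `[0, 1], continuous phi} ->
  exists B : nat, forall x, 0 <= x <= 1 -> `|phi x| <= B%:R.
Proof.
move=> cphi.
have [xM _ maxM] := EVT_max ler01 cphi; have [xm _ minm] := EVT_min ler01 cphi.
exists (Num.truncn (`|phi xM| + `|phi xm|)).+1 => x x01.
apply: le_trans (ltW (truncnS_gt _)).
have x01' : x \in `[0, 1] by rewrite in_itv.
have := maxM x x01'; have := minm x x01'.
have := normr_ge0 (phi xM); have := normr_ge0 (phi xm).
have := ler_norm (phi xM); have := ler_norm (- phi xm); rewrite normrN.
by rewrite ler_norml => ? ? ? ? ? ?; apply/andP; split; lra.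
Qed.

Theorem lemma3p1 (R : realType) (f g : R -> R)
  (hf : {within `[0, 1], continuous f})
  (hg : {within `[0, 1], continuous g}) :
  (upper_box_dim (graph01 (fun x => (f x * g x)%R))
   <= maxe (upper_box_dim (graph01 f)) (upper_box_dim (graph01 g)))%E.
Proof.
have [Bf f_bound] := bounded01 hf; have [Bg g_bound] := bounded01 hg.
apply: limf_esup_le_maxe => e e0; near=> d.
have d0 : 0 < d by near: d; exact: nbhs_right_gt.
have d01 : 0 < d < 1 by rewrite d0; near: d; exact: nbhs_right_lt.
have [nf [ng [nh [Ef Eg Eh [nf0 ng0 nh0 le_nh]]]]] :=
  Ndelta_graph_mul hf hg f_bound g_bound d0.
apply: le_trans (box_ratio_le_maxe d01 Ef Eg Eh nf0 ng0 nh0 le_nh) _.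
apply: leeD => //; rewrite lee_fin ltW //; near: d; exact: ln_ratio_near0.
Unshelve. all: by end_near.
Qed.
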